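(* Let $\mathbb{H}$ be a Hilbert space with norm $\|\cdot\|$, $f\in\mathbb{H}$, and let $D$ be a finite or infinite dictionary of elements of $\mathbb{H}$. For $\lambda\ge0$ and $\delta>0$ define $$L_D(f,\lambda)=\inf_{h\in\mathcal{L}_1(D)}\big(\|f-h\|^2+\lambda\|h\|_{\mathcal{L}_1(D)}\big),\qquad K_D(f,\delta)=\inf_{h\in\mathcal{L}_1(D)}\big(\|f-h\|+\delta\|h\|_{\mathcal{L}_1(D)}\big).$$ Then for every $\lambda\ge0$, $$\frac12\inf_{\delta>0}\Big(K_D^2(f,\delta)+\frac{\lambda^2}{2\delta^2}\Big)\le L_D(f,\lambda)\le\inf_{\delta>0}\Big(K_D^2(f,\delta)+\frac{\lambda^2}{4\delta^2}\Big).$$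
   Context: $\mathcal{L}_1(D)$ denotes the set of $h\in\mathbb{H}$ which can be written $h=\sum_{\phi\in D}\theta_\phi\phi$ with $\sum_{\phi\in D}|\theta_\phi|<\infty$, equipped with $\|h\|_{\mathcal{L}_1(D)}=\inf\{\sum_{\phi\in D}|\theta_\phi|:h=\sum_{\phi\in D}\theta_\phi\phi\}$. *)

From HB Require Import structures.
From mathcomp Require Import all_boot all_order all_algebra.
From mathcomp Require Import all_classical all_reals all_analysis.
Set Implicit Arguments. Unset Strict Implicit. Unset Printing Implicit Defensive.
Import Order.TTheory GRing.Theory Num.Theory.
Import numFieldNormedType.Exports.
Local Open Scope classical_set_scope.
Local Open Scope ring_scope.

Definition hilbert_inner (R : realType) (V : completeNormedModType R)
  (ip : V -> V -> R) : Prop :=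
  (forall x y, ip x y = ip y x) /\
  (forall (a : R) (x y z : V), ip (a *: x + y) z = a * ip x z + ip y z) /\
  (forall x, `|x| ^+ 2 = ip x x).

Definition l1rep (R : realType) (V : completeNormedModType R)
  (D : set V) (h : V) (c : R) : Prop :=
  exists (phi : nat -> V) (theta : nat -> R),
    (forall n, theta n != 0 -> D (phi n)) /\
    series (fun n => theta n *: phi n) @ \oo --> h /\
    series (fun n => `|theta n|) @ \oo --> c.

Definition L1 (R : realType) (V : completeNormedModType R) (D : set V)
  : set V := [set h | exists c, l1rep D h c].

Definition l1norm (R : realType) (V : completeNormedModType R)
  (D : set V) (h : V) : R := inf [set c | l1rep D h c].

Definition LD (R : realType) (V : completeNormedModType R)
  (D : set V) (f : V) (lambda : R) : R :=
  inf [set `|f - h| ^+ 2 + lambda * l1norm D h | h in L1 D].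

Definition KD (R : realType) (V : completeNormedModType R)
  (D : set V) (f : V) (delta : R) : R :=
  inf [set `|f - h| + delta * l1norm D h | h in L1 D].

From HB Require Import structures.
From mathcomp Require Import all_boot all_order all_algebra.
From mathcomp Require Import all_classical all_reals all_analysis.
From mathcomp Require Import ring lra.
Import Order.TTheory GRing.Theory Num.Theory.
Import numFieldNormedType.Exports.
Local Open Scope classical_set_scope.
Local Open Scope ring_scope.

Set Implicit Arguments.
Unset Strict Implicit.

(* For h in L_1(D) write a = |f - h| and b = ||h||_{L_1(D)}.  Upper bound: by
   AM-GM, lambda b <= (delta b)^2 + lambda^2/(4 delta^2), so
   a^2 + lambda b <= (a + delta b)^2 + lambda^2/(4 delta^2), and the infimum
   over h passes through the square.  Lower bound: (a + delta b)^2 <=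
   2 a^2 + 2 delta^2 b^2, and choosing delta^2 = lambda/(2b) (up to epsilon)
   makes 2 delta^2 b^2 + lambda^2/(2 delta^2) = 2 lambda b. *)

Section RealInequalities.
Variable R : realType.

Lemma le_sqr_inf (S : set R) (L : R) : S !=set0 -> (forall x, S x -> 0 <= x) ->
  (forall x, S x -> L <= x ^+ 2) -> L <= (inf S) ^+ 2.
Proof.
move=> S0 S_ge0 LS.
have inf_ge0 : 0 <= inf S by exact: lb_le_inf.
have [L_le0|L_gt0] := leP L 0; first exact: le_trans L_le0 (sqr_ge0 _).
have sqrtL_le : Num.sqrt L <= inf S.
  apply: lb_le_inf => // x Sx.
  by rewrite -ler_sqr ?nnegrE ?sqrtr_ge0 ?S_ge0 // sqr_sqrtr ?LS // ltW.
by rewrite -(sqr_sqrtr (ltW L_gt0)) ler_sqr ?nnegrE ?sqrtr_ge0.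
Qed.

Lemma penalty_le_sqr_add (a b d l : R) : 0 <= a -> 0 <= b -> 0 < d ->
  a ^+ 2 + l * b <= (a + d * b) ^+ 2 + l ^+ 2 / (4 * d ^+ 2).
Proof.
move=> a0 b0 d0; set u := d * b; set v := l / (2 * d).
have -> : l * b = 2 * u * v by rewrite /u /v; field; rewrite gt_eqF.
have -> : l ^+ 2 / (4 * d ^+ 2) = v ^+ 2 by rewrite /v; field; rewrite gt_eqF.
have u0 : 0 <= u by rewrite mulr_ge0 // ltW.
have := sqr_ge0 (u - v); have := mulr_ge0 a0 u0; nra.
Qed.

Lemma near_optimal_scale (b l e : R) : 0 <= b -> 0 <= l -> 0 < e ->
  exists t : R, 0 < t /\ 2 * t * b ^+ 2 + l ^+ 2 / (2 * t) <= 2 * l * b + e.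
Proof.
move=> b0 l0 e0.
have [l_gt0|l_le0] := ltP 0 l; last first.
  have -> : l = 0 by apply/eqP; rewrite eq_le l_le0 l0.
  have b2_gt0 : 0 < b ^+ 2 + 1 by rewrite ltr_wpDl ?sqr_ge0.
  exists (e / (2 * (b ^+ 2 + 1))); split; first by rewrite divr_gt0 ?mulr_gt0.
  have -> : 2 * (e / (2 * (b ^+ 2 + 1))) * b ^+ 2 = e * (b ^+ 2 / (b ^+ 2 + 1)).
    by field; rewrite gt_eqF.
  rewrite expr0n /= !mul0r !mulr0 ?add0r ?addr0 mul0r add0r.
  by rewrite ler_piMr ?ltW // ltr_pdivrMr // mul1r ltrDl.
have [b_gt0|b_le0] := ltP 0 b; last first.
  have -> : b = 0 by apply/eqP; rewrite eq_le b_le0 b0.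
  exists (l ^+ 2 / e); split; first by rewrite divr_gt0 ?exprn_gt0.
  have -> : l ^+ 2 / (2 * (l ^+ 2 / e)) = e / 2 by field; rewrite ?gt_eqF ?exprn_gt0.
  rewrite expr0n /= !mulr0 ?add0r ?addr0; lra.
exists (l / (2 * b)); split; first by rewrite divr_gt0 ?mulr_gt0.
have -> : 2 * (l / (2 * b)) * b ^+ 2 + l ^+ 2 / (2 * (l / (2 * b))) = 2 * l * b.
  by field; rewrite !gt_eqF.
lra.
Qed.

End RealInequalities.

Section L1Approximation.
Variables (R : realType) (V : completeNormedModType R) (D : set V) (f : V).

Lemma l1rep_ge0 h c : l1rep D h c -> 0 <= c.
Proof.
move=> [phi [theta [_ [_ cvg_c]]]].
rewrite -(cvg_lim _ cvg_c) //; apply: limr_ge; first by apply/cvg_ex; exists c.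
by near=> n; apply: sumr_ge0 => i _; exact: normr_ge0.
Unshelve. all: by end_near.
Qed.

Lemma L1_0 : L1 D 0.
Proof.
exists 0, (fun _ => 0), (fun _ => 0); split; first by move=> n; rewrite eqxx.
split; rewrite /series /=.
- by under eq_fun do rewrite big1 ?scale0r //; exact: cvg_cst.
- by under eq_fun do rewrite big1 ?normr0 //; exact: cvg_cst.
Qed.

Lemma l1norm_ge0 h : L1 D h -> 0 <= l1norm D h.
Proof. by move=> [c hc]; apply: lb_le_inf; [exists c | move=> x /l1rep_ge0]. Qed.

Lemma KD_le d h : 0 <= d -> L1 D h -> KD D f d <= `|f - h| + d * l1norm D h.
Proof.
move=> d0 Lh; apply: ge_inf; last by exists h.
by exists 0 => _ [g Lg <-]; rewrite addr_ge0 ?mulr_ge0 ?l1norm_ge0.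
Qed.

Lemma KD_ge0 d : 0 <= d -> 0 <= KD D f d.
Proof.
move=> d0; apply: lb_le_inf; first by exists (`|f - 0| + d * l1norm D 0), 0; [exact: L1_0|].
by move=> _ [g Lg <-]; rewrite addr_ge0 ?mulr_ge0 ?l1norm_ge0.
Qed.

Variables (lambda : R) (lambda_ge0 : 0 <= lambda).

Lemma LD_le h : L1 D h -> LD D f lambda <= `|f - h| ^+ 2 + lambda * l1norm D h.
Proof.
move=> Lh; apply: ge_inf; last by exists h.
by exists 0 => _ [g Lg <-]; rewrite addr_ge0 ?sqr_ge0 ?mulr_ge0 ?l1norm_ge0.
Qed.

Lemma LD_le_KD d : 0 < d ->
  LD D f lambda <= KD D f d ^+ 2 + lambda ^+ 2 / (4 * d ^+ 2).
Proof.
move=> d0; rewrite -lerBlDr; apply: le_sqr_inf.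
- by exists (`|f - 0| + d * l1norm D 0), 0; [exact: L1_0|].
- by move=> _ [g Lg <-]; rewrite addr_ge0 ?mulr_ge0 ?l1norm_ge0 ?(ltW d0).
move=> _ [h Lh <-]; rewrite lerBlDr; apply: le_trans (LD_le Lh) _.
by apply: penalty_le_sqr_add; rewrite ?l1norm_ge0.
Qed.

Lemma KD_le_LD_term h : L1 D h ->
  2^-1 * inf [set KD D f delta ^+ 2 + lambda ^+ 2 / (2 * delta ^+ 2)
              | delta in [set d : R | 0 < d]]
    <= `|f - h| ^+ 2 + lambda * l1norm D h.
Proof.
move=> Lh; set a := `|f - h|; set b := l1norm D h.
have b0 : 0 <= b by exact: l1norm_ge0.
rewrite -ler_pdivlMl ?invr_gt0 // invrK; apply/ler_addgt0Pr => e e0.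
have [t [t0 t_opt]] := near_optimal_scale b0 lambda_ge0 e0.
set d := Num.sqrt t; have d0 : 0 < d by rewrite sqrtr_gt0.
have d2 : d ^+ 2 = t by rewrite sqr_sqrtr // ltW.
apply: (@le_trans _ _ (KD D f d ^+ 2 + lambda ^+ 2 / (2 * d ^+ 2))).
  apply: ge_inf; last by exists d.
  by exists 0 => _ [d' _ <-]; rewrite addr_ge0 ?sqr_ge0 // divr_ge0 ?sqr_ge0 // mulr_ge0 ?sqr_ge0.
have KD_sqr : KD D f d ^+ 2 <= (a + d * b) ^+ 2.
  rewrite ler_sqr ?nnegrE ?KD_ge0 ?(ltW d0) //; first exact: KD_le (ltW d0) Lh.
  by rewrite addr_ge0 ?normr_ge0 // mulr_ge0 // ltW.
have : (a + d * b) ^+ 2 <= 2 * a ^+ 2 + 2 * t * b ^+ 2.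
  by rewrite -d2; have := sqr_ge0 (a - d * b); nra.
rewrite d2 in KD_sqr *; lra.
Qed.

End L1Approximation.

Theorem lemma5p1 (R : realType) (V : completeNormedModType R)
  (ip : V -> V -> R) (Hip : hilbert_inner ip)
  (f : V) (D : set V) (lambda : R) (hlambda : 0 <= lambda) :
  2^-1 * inf [set KD D f delta ^+ 2 + lambda ^+ 2 / (2 * delta ^+ 2)
              | delta in [set d : R | 0 < d]]
    <= LD D f lambda /\
  LD D f lambda <=
    inf [set KD D f delta ^+ 2 + lambda ^+ 2 / (4 * delta ^+ 2)
         | delta in [set d : R | 0 < d]].
Proof.
split.
- apply: lb_le_inf; first by exists (`|f - 0| ^+ 2 + lambda * l1norm D 0), 0; [exact: L1_0|].
  by move=> _ [h Lh <-]; exact: KD_le_LD_term.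
- apply: lb_le_inf; first by exists (KD D f 1 ^+ 2 + lambda ^+ 2 / (4 * 1 ^+ 2)), 1; [exact: ltr01|].
  by move=> _ [d d0 <-]; exact: LD_le_KD.
Qed.
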